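(* Let $h_1\subsetneq h_2^*$ be strongly separated half-spaces. Then for $i=1,2$ the set $h_i\cap B(h_1,h_2)$ consists of a single vertex $x_i$, and $B(h_1,h_2)=\mathcal I(x_1,x_2)$. Moreover the half-spaces separating points of $B(h_1,h_2)$ are exactly those $h$ with $h_1\subseteq h\subseteq h_2^*$ or $h_1\subseteq h^*\subseteq h_2^*$.
   Context: $X$ is a finite-dimensional CAT(0) cube complex identified with its vertex set, $\mathfrak H$ its set of half-spaces, $h^*=X\setminus h$, $U_v=\{h:v\in h\}$. Transverse ($\pitchfork$): $h\cap k,h\cap k^*,h^*\cap k,h^*\cap k^*$ all nonempty; strongly separated: no half-space transverse to both. Write $\hat a\subset b$ if $a\subsetneq b$ or $a^*\subsetneq b$. For $h_1\subsetneq h_2^*$, $\beta(h_1,h_2)$ is the set of $h$ with ($\hat h_1\subset h$ and $h\pitchfork h_2$) or ($\hat h_2\subset h$ and $h\pitchfork h_1$) or ($\hat h_1\subset h$ and $\hat h_2\subset h$); the bridge is $B(h_1,h_2)=\{x\in X: x\in h\ \forall h\in\beta(h_1,h_2)\}$. For vertices $v,w$, $\mathcal I(v,w)=\{m\in X:U_v\cap U_w\subset U_m\}$. *)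

(* A CAT(0) cube complex is modelled by its vertex set X
   together with the 1-skeleton adjacency: a median graph. *)
From Stdlib Require Import Arith List.

Section Defs.
Variable X : Type.
Variable adj : X -> X -> Prop.

Inductive walk : nat -> X -> X -> Prop :=
| walk0 x : walk 0 x x
| walkS n x y z : adj x y -> walk n y z -> walk (S n) x z.

Definition is_dist (u v : X) (n : nat) : Prop :=
  walk n u v /\ forall m, walk m u v -> n <= m.

Definition geod_interval (u v w : X) : Prop :=
  exists a b c, is_dist u w a /\ is_dist w v b /\ is_dist u v c /\ a + b = c.

Definition median_graph : Prop :=
  (forall x y, adj x y -> adj y x) /\
  (forall x, ~ adj x x) /\
  (forall u v, exists n, walk n u v) /\
  (forall u v w, exists! m,
      geod_interval u v m /\ geod_interval v w m /\ geod_interval u w m).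

Definition convex (C : X -> Prop) : Prop :=
  forall u v w, C u -> C v -> geod_interval u v w -> C w.

Definition compl (h : X -> Prop) : X -> Prop := fun x => ~ h x.

Definition halfspace (h : X -> Prop) : Prop :=
  (exists x, h x) /\ (exists x, ~ h x) /\ convex h /\ convex (compl h).

Definition subset (a b : X -> Prop) : Prop := forall x, a x -> b x.
Definition psubset (a b : X -> Prop) : Prop :=
  subset a b /\ exists x, b x /\ ~ a x.

Definition transverse (h k : X -> Prop) : Prop :=
  (exists x, h x /\ k x) /\ (exists x, h x /\ ~ k x) /\
  (exists x, ~ h x /\ k x) /\ (exists x, ~ h x /\ ~ k x).

Definition strongly_separated (h k : X -> Prop) : Prop :=
  ~ exists l, halfspace l /\ transverse l h /\ transverse l k.

Definition finite_dim : Prop :=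
  exists D : nat, forall l : list (X -> Prop),
    (forall h, In h l -> halfspace h) ->
    (forall i j, i < j < length l ->
       transverse (nth i l (fun _ => False)) (nth j l (fun _ => False))) ->
    length l <= D.

Definition hat_sub (a b : X -> Prop) : Prop := psubset a b \/ psubset (compl a) b.

Definition in_beta (h1 h2 h : X -> Prop) : Prop :=
  (hat_sub h1 h /\ transverse h h2) \/
  (hat_sub h2 h /\ transverse h h1) \/
  (hat_sub h1 h /\ hat_sub h2 h).

Definition bridge (h1 h2 : X -> Prop) (x : X) : Prop :=
  forall h, halfspace h -> in_beta h1 h2 h -> h x.

Definition Iint (v w m : X) : Prop :=
  forall h, halfspace h -> h v -> h w -> h m.

End Defs.
Arguments walk {X}.
Arguments is_dist {X}.
Arguments geod_interval {X}.
Arguments median_graph {X}.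
Arguments convex {X}.
Arguments compl {X}.
Arguments halfspace {X}.
Arguments subset {X}.
Arguments psubset {X}.
Arguments transverse {X}.
Arguments strongly_separated {X}.
Arguments finite_dim {X}.
Arguments hat_sub {X}.
Arguments in_beta {X}.
Arguments bridge {X}.
Arguments Iint {X}.

(* Take a closest pair [p] in [h1], [q] in [h2]. A median argument shows that every
   half-space separating [p] from [q] separates [h1] from [h2]; this puts [p] and [q] in
   the bridge and identifies the half-spaces separating them. Strong separation makes
   every half-space containing both [p] and [q] one of those cutting out the bridge, so
   the bridge is [I(p, q)], and a half-space separating two points of [I(p, q)]
   separates [p] from [q]. Uniqueness of [x1], [x2] uses that two distinct vertices of a
   median graph are separated by a half-space [W a b] (Djoković–Winkler). *)

From Stdlib Require Import Lia Wf_nat Classical ClassicalEpsilon.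

Lemma least_nat_exists (P : nat -> Prop) :
  (exists n, P n) -> exists n, P n /\ forall m, P m -> n <= m.
Proof.
  intros HP.
  destruct (dec_inh_nat_subset_has_unique_least_element P (fun n => classic (P n)) HP)
    as [n [Hn _]].
  exists n; exact Hn.
Qed.

Section MedianGraph.
Variable X : Type.
Variable adj : X -> X -> Prop.
Hypothesis Hmed : median_graph adj.

Lemma adj_sym x y : adj x y -> adj y x.
Proof. apply (proj1 Hmed). Qed.

Lemma walk_app n m x y z : walk adj n x y -> walk adj m y z -> walk adj (n + m) x z.
Proof. induction 1; simpl; [auto|]. intros; econstructor; eauto. Qed.

Lemma walk_rev n x y : walk adj n x y -> walk adj n y x.
Proof.
  induction 1 as [|n x y z Hxy _ IH]; [constructor|].
  replace (S n) with (n + 1) by lia.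
  apply (walk_app _ _ _ _ _ IH). econstructor; [apply adj_sym, Hxy|constructor].
Qed.

Lemma dist_exists u v : exists n, is_dist adj u v n.
Proof.
  destruct (least_nat_exists (fun n => walk adj n u v)) as [n Hn].
  - exact (proj1 (proj2 (proj2 Hmed)) u v).
  - exists n; exact Hn.
Qed.

Definition d u v : nat := proj1_sig (constructive_indefinite_description _ (dist_exists u v)).

Lemma d_spec u v : is_dist adj u v (d u v).
Proof. exact (proj2_sig (constructive_indefinite_description _ (dist_exists u v))). Qed.

Lemma d_le_walk n u v : walk adj n u v -> d u v <= n.
Proof. apply (proj2 (d_spec u v)). Qed.

Lemma is_dist_d u v n : is_dist adj u v n -> d u v = n.
Proof.
  intros [Hw Hmin]. pose proof (d_le_walk _ _ _ Hw).
  pose proof (Hmin _ (proj1 (d_spec u v))). lia.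
Qed.

Lemma d_sym u v : d u v = d v u.
Proof.
  pose proof (d_le_walk _ _ _ (walk_rev _ _ _ (proj1 (d_spec u v)))).
  pose proof (d_le_walk _ _ _ (walk_rev _ _ _ (proj1 (d_spec v u)))). lia.
Qed.

Lemma d_triangle u v w : d u w <= d u v + d v w.
Proof. apply d_le_walk, walk_app with v; apply d_spec. Qed.

Lemma d_refl u : d u u = 0.
Proof. pose proof (d_le_walk 0 u u (walk0 _ _ u)). lia. Qed.

Lemma d_eq0 u v : d u v = 0 -> u = v.
Proof.
  intros H. pose proof (proj1 (d_spec u v)) as Hw. rewrite H in Hw.
  inversion Hw; reflexivity.
Qed.

Lemma d_succ_step u v k : d u v = S k -> exists w, adj u w /\ d w v = k.
Proof.
  intros H. pose proof (proj1 (d_spec u v)) as Hw. rewrite H in Hw.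
  inversion Hw as [|? ? w ? Huw Hwv]; subst.
  exists w; split; [exact Huw|].
  pose proof (d_le_walk _ _ _ Hwv).
  pose proof (d_le_walk _ _ _ (walkS _ _ _ _ _ _ Huw (proj1 (d_spec w v)))). lia.
Qed.

Lemma d_adj u v : adj u v -> d u v = 1.
Proof.
  intros H. pose proof (d_le_walk _ _ _ (walkS _ _ _ _ _ _ H (walk0 _ _ v))).
  destruct (d u v) eqn:E; [|lia].
  apply d_eq0 in E; subst. exfalso; exact (proj1 (proj2 Hmed) v H).
Qed.

Lemma adj_of_d1 u v : d u v = 1 -> adj u v.
Proof.
  intros H. destruct (d_succ_step u v 0 H) as [w [Huw Hw]].
  apply d_eq0 in Hw; subst; exact Huw.
Qed.

Ltac dist_facts :=
  repeat match goal with
  | H : adj ?x ?y |- _ =>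
      lazymatch goal with _ : d x y = 1 |- _ => fail | _ => pose proof (d_adj x y H) end
  | |- context [d ?x ?y] =>
      lazymatch goal with
      | _ : d x y = d y x |- _ => fail | _ : d y x = d x y |- _ => fail
      | _ => pose proof (d_sym x y) end
  | _ : context [d ?x ?y] |- _ =>
      lazymatch goal with
      | _ : d x y = d y x |- _ => fail | _ : d y x = d x y |- _ => fail
      | _ => pose proof (d_sym x y) end
  end.

Ltac dist_lia := dist_facts; lia.

Lemma geod_interval_iff u v w : geod_interval adj u v w <-> d u w + d w v = d u v.
Proof.
  split.
  - intros (a & b & c & Ha & Hb & Hc & E).
    rewrite (is_dist_d _ _ _ Ha), (is_dist_d _ _ _ Hb), (is_dist_d _ _ _ Hc); exact E.
  - intros E. exists (d u w), (d w v), (d u v). repeat split; try apply d_spec; exact E.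
Qed.

Definition is_median u v w m : Prop :=
  d u m + d m v = d u v /\ d v m + d m w = d v w /\ d u m + d m w = d u w.

Lemma is_median_iff u v w m :
  is_median u v w m <->
  geod_interval adj u v m /\ geod_interval adj v w m /\ geod_interval adj u w m.
Proof. unfold is_median; rewrite !geod_interval_iff; tauto. Qed.

Lemma median_exists u v w : exists m, is_median u v w m.
Proof.
  destruct (proj2 (proj2 (proj2 Hmed)) u v w) as [m [Hm _]].
  exists m; apply is_median_iff, Hm.
Qed.

Lemma median_unique u v w m m' : is_median u v w m -> is_median u v w m' -> m = m'.
Proof.
  destruct (proj2 (proj2 (proj2 Hmed)) u v w) as [m0 [_ Huniq]].
  intros Hm Hm'.
  rewrite <- (Huniq m (proj1 (is_median_iff _ _ _ _) Hm)).
  exact (Huniq m' (proj1 (is_median_iff _ _ _ _) Hm')).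
Qed.

(* The median of [x], [y], [z] lies on the edge [xy], hence is [x] or [y]. *)
Lemma d_adj_parity x y z : adj x y -> d x z = S (d y z) \/ d y z = S (d x z).
Proof.
  intros Hxy. destruct (median_exists x y z) as [m (E1 & E2 & E3)].
  destruct (d x m) eqn:Exm.
  - apply d_eq0 in Exm; subst m. dist_lia.
  - assert (Emy : d m y = 0) by dist_lia.
    apply d_eq0 in Emy; subst m. dist_lia.
Qed.

(* By parity, [W a b] is the set of vertices closer to [a] than to [b]. *)
Definition W a b z : Prop := d b z = S (d a z).

Lemma W_dichotomy a b z : adj a b -> W a b z \/ W b a z.
Proof. intros Hab; destruct (d_adj_parity a b z Hab); [right|left]; exact H. Qed.

Lemma W_compl a b z : adj a b -> ~ W a b z <-> W b a z.
Proof.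
  unfold W; intros Hab. destruct (W_dichotomy a b z Hab); unfold W in *; lia.
Qed.

(* Otherwise [b] and [a'] would both be medians of [a], [b'], [z]. *)
Lemma W_square a b b' a' z : adj a b -> adj b b' -> adj b' a' -> adj a' a ->
  b <> a' -> a <> b' -> W a' b' z -> W a b z.
Proof.
  unfold W. intros Hab Hbb' Hb'a' Ha'a Hba' Hab' Hz.
  destruct (d_adj_parity a b z Hab) as [P|P]; [exfalso|exact P].
  assert (E : d a z = d b' z /\ d b z = d a' z).
  { destruct (d_adj_parity a' a z Ha'a); destruct (d_adj_parity b b' z Hbb'); lia. }
  assert (Dab' : d a b' = 2).
  { pose proof (d_triangle a b b'). dist_facts.
    destruct (d a b') as [|[|[|k]]] eqn:D; try lia.
    - contradiction (Hab' (d_eq0 _ _ D)).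
    - destruct (d_adj_parity a b' z (adj_of_d1 _ _ D)); lia. }
  apply Hba', (median_unique a b' z); unfold is_median; dist_lia.
Qed.

(* Djoković–Winkler: an edge [uu'] crossing from [W a b] to [W b a] defines the same
   half-space; induct on [d a u], moving [u] one step towards [a] along a square. *)
Lemma W_parallel a b u u' : adj a b -> adj u u' -> W a b u -> W b a u' ->
  forall z, W a b z <-> W u u' z.
Proof.
  remember (d a u) as k eqn:Hk. revert u u' Hk.
  induction k as [|k IH]; unfold W; intros u u' Hk Hab Huu' Hu Hu' z.
  - symmetry in Hk. apply d_eq0 in Hk; subst u.
    assert (Eb : d b u' = 0) by dist_lia.
    apply d_eq0 in Eb; subst u'. tauto.
  - destruct (d_succ_step u a k ltac:(dist_lia)) as [t [Hut Hta]].
    assert (Eu' : d a u' = S (S k) /\ d b u' = S k).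
    { destruct (d_adj_parity u u' a Huu'); destruct (d_adj_parity u u' b Huu'); dist_lia. }
    assert (Etb : d b t = S k).
    { pose proof (d_triangle b a t).
      destruct (d_adj_parity u t b Hut); destruct (d_adj_parity u t a Hut); dist_lia. }
    assert (Dtu' : d t u' = 2).
    { pose proof (d_triangle t u u'). dist_facts.
      destruct (d t u') as [|[|[|j]]] eqn:D; try lia.
      - apply d_eq0 in D; subst; lia.
      - destruct (d_adj_parity t u' a (adj_of_d1 _ _ D)); lia. }
    destruct (median_exists t u' b) as [m (M1 & M2 & M3)].
    assert (Dtm : d t m = 1 /\ d u' m = 1 /\ d m b = k) by dist_lia.
    destruct Dtm as [Dtm [Du'm Dmb]].
    apply adj_of_d1 in Dtm. apply adj_of_d1 in Du'm.
    assert (Dma : d a m = S k).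
    { pose proof (d_triangle a m u').
      destruct (d_adj_parity t m a Dtm); dist_lia. }
    assert (Hum : u <> m) by (intros ->; dist_lia).
    assert (Hu't : u' <> t) by (intros ->; dist_lia).
    assert (Wt : W a b t) by (unfold W; dist_lia).
    assert (Wm : W b a m) by (unfold W; dist_lia).
    rewrite (IH t m ltac:(dist_lia) Hab Dtm Wt Wm z).
    split; intros Hz.
    + apply (W_square u u' m t z); auto using adj_sym.
    + apply (W_square t m u' u z); auto using adj_sym.
Qed.

Lemma W_geodesic_closed a b u v w : adj a b -> W a b u -> W a b v ->
  d u w + d w v = d u v -> W a b w.
Proof.
  intros Hab. remember (d u w) as n eqn:Hn. revert u Hn.
  induction n as [|n IH]; intros u Hn Hu Hv Hw.
  - symmetry in Hn; apply d_eq0 in Hn; subst; exact Hu.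
  - destruct (d_succ_step u w n (eq_sym Hn)) as [u' [Huu' Hu'w]].
    pose proof (d_triangle u' w v). pose proof (d_triangle u u' v).
    destruct (W_dichotomy a b u' Hab) as [Hu'|Hu'].
    + apply (IH u'); [dist_lia|exact Hu'|exact Hv|dist_lia].
    + exfalso. apply (W_parallel a b u u' Hab Huu' Hu Hu' v) in Hv.
      unfold W in Hv; dist_lia.
Qed.

Lemma W_halfspace a b : adj a b -> halfspace adj (W a b).
Proof.
  intros Hab. unfold W. split; [|split; [|split]].
  - exists a. dist_facts. rewrite d_refl. lia.
  - exists b. rewrite d_refl. lia.
  - intros u v w Hu Hv Hw. apply geod_interval_iff in Hw.
    exact (W_geodesic_closed a b u v w Hab Hu Hv Hw).
  - intros u v w Hu Hv Hw. apply geod_interval_iff in Hw.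
    apply (W_compl a b u Hab) in Hu. apply (W_compl a b v Hab) in Hv.
    apply (W_compl a b w Hab).
    exact (W_geodesic_closed b a u v w (adj_sym _ _ Hab) Hu Hv Hw).
Qed.

Lemma halfspace_separation x y : x <> y -> exists k, halfspace adj k /\ k x /\ ~ k y.
Proof.
  intros Hxy. destruct (d x y) as [|n] eqn:E; [exact (False_ind _ (Hxy (d_eq0 _ _ E)))|].
  destruct (d_succ_step x y n E) as [x' [Hxx' Hx'y]].
  exists (W x x'). split; [apply W_halfspace, Hxx'|unfold W; split].
  - rewrite d_refl. dist_lia.
  - lia.
Qed.

Lemma halfspace_compl h : halfspace adj h -> halfspace adj (compl h).
Proof.
  intros ([a Ha] & [b Hb] & Hc & Hc'). split; [|split; [|split]].
  - exists b; exact Hb.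
  - exists a; unfold compl; tauto.
  - exact Hc'.
  - intros u v w Hu Hv Hw Hnw. apply Hnw, (Hc u v w); [apply NNPP, Hu|apply NNPP, Hv|exact Hw].
Qed.

(* The median [m] of [p], [q], [a] lies in [A] and on a geodesic from [p] to [q];
   minimality forces [m = p]. *)
Lemma closest_pair_side (A C k : X -> Prop) p q :
  convex adj A -> A p -> C q -> (forall p' q', A p' -> C q' -> d p q <= d p' q') ->
  halfspace adj k -> k p -> ~ k q -> subset A k.
Proof.
  intros HA Hp Hq Hmin Hk Hkp Hkq a Ha. apply NNPP; intros Hka.
  destruct (median_exists p q a) as [m Hm].
  pose proof Hm as (Epq & _ & _).
  apply is_median_iff in Hm as (Gpq & Gqa & Gpa).
  assert (HAm : A m) by exact (HA p a m Hp Ha Gpa).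
  assert (Hkm : ~ k m) by exact (proj2 (proj2 (proj2 Hk)) q a m Hkq Hka Gqa).
  pose proof (Hmin m q HAm Hq).
  assert (Epm : d p m = 0) by lia.
  apply d_eq0 in Epm; subst m. exact (Hkm Hkp).
Qed.

Lemma closest_pair_separated (A C k : X -> Prop) p q :
  convex adj A -> convex adj C -> A p -> C q ->
  (forall p' q', A p' -> C q' -> d p q <= d p' q') ->
  halfspace adj k -> k p -> ~ k q -> subset A k /\ subset C (compl k).
Proof.
  intros HA HC Hp Hq Hmin Hk Hkp Hkq. split.
  - exact (closest_pair_side A C k p q HA Hp Hq Hmin Hk Hkp Hkq).
  - apply (closest_pair_side C A (compl k) q p HC Hq Hp).
    + intros q' p' Hq' Hp'. rewrite (d_sym q p), (d_sym q' p'). exact (Hmin p' q' Hp' Hq').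
    + exact (halfspace_compl k Hk).
    + exact Hkq.
    + unfold compl; tauto.
Qed.

Lemma Iint_separation p q x y h : halfspace adj h ->
  Iint adj p q x -> Iint adj p q y -> h x -> ~ h y -> (h p /\ ~ h q) \/ (~ h p /\ h q).
Proof.
  intros Hh Hx Hy Hhx Hhy.
  destruct (classic (h p)) as [Hp|Hp]; destruct (classic (h q)) as [Hq|Hq].
  - exact (False_ind _ (Hhy (Hy h Hh Hp Hq))).
  - left; tauto.
  - right; tauto.
  - exfalso. exact (Hx (compl h) (halfspace_compl h Hh) Hp Hq Hhx).
Qed.

Lemma hat_sub_of_not_transverse (a k : X -> Prop) : ~ transverse k a ->
  (exists x, k x /\ a x) -> (exists x, k x /\ ~ a x) -> hat_sub a k.
Proof.
  intros Hnt Hka Hkna. unfold hat_sub, psubset, subset, compl.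
  destruct (classic (exists x, ~ k x /\ a x)) as [Hnka|Hnka].
  - destruct (classic (exists x, ~ k x /\ ~ a x)) as [Hnkna|Hnkna].
    + exfalso; apply Hnt; repeat split; assumption.
    + right. split.
      * intros x Hx. apply NNPP; intros Hkx. apply Hnkna; exists x; tauto.
      * destruct Hka as [x Hx]; exists x; tauto.
  - left. split; [|exact Hkna].
    intros x Hx. apply NNPP; intros Hkx. apply Hnka; exists x; tauto.
Qed.

Lemma hat_sub_cases (a b k : X -> Prop) : subset a (compl b) -> hat_sub a k ->
  subset a k \/ (subset b k /\ exists r, a r /\ k r).
Proof.
  unfold hat_sub, psubset, subset, compl. intros Hab [[Hak _]|[Hak [r [Hkr Har]]]].
  - left; exact Hak.
  - right. split.
    + intros x Hbx. apply Hak. intros Hax. exact (Hab x Hax Hbx).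
    + exists r. split; [apply NNPP, Har|exact Hkr].
Qed.

Lemma in_beta_sym (h1 h2 k : X -> Prop) : in_beta h1 h2 k -> in_beta h2 h1 k.
Proof. unfold in_beta; tauto. Qed.

Lemma bridge_sym (h1 h2 : X -> Prop) x : bridge adj h1 h2 x -> bridge adj h2 h1 x.
Proof. intros Hx k Hk Hb. exact (Hx k Hk (in_beta_sym _ _ _ Hb)). Qed.

Lemma in_beta_cases (h1 h2 k : X -> Prop) : subset h1 (compl h2) -> in_beta h1 h2 k ->
  subset h1 k \/ (subset h2 k /\ exists r, h1 r /\ k r).
Proof.
  intros Hdisj Hb.
  assert (Hdisj' : subset h2 (compl h1)) by (intros x H2x H1x; exact (Hdisj x H1x H2x)).
  destruct Hb as [[Hs _]|[[Hs [[r Hr] _]]|[Hs _]]];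
    try exact (hat_sub_cases h1 h2 k Hdisj Hs).
  destruct (hat_sub_cases h2 h1 k Hdisj' Hs) as [H2k|[H1k _]].
  - right. split; [exact H2k|exists r; tauto].
  - left; exact H1k.
Qed.

(* By strong separation [k] is transverse to at most one of [h1], [h2]; since [k] meets
   both sides of each, [hat_sub] holds for any one it is not transverse to. *)
Lemma in_beta_of_meets (h1 h2 k : X -> Prop) p q : subset h1 (compl h2) -> strongly_separated adj h1 h2 ->
  halfspace adj k -> h1 p -> h2 q -> k p -> k q -> in_beta h1 h2 k.
Proof.
  intros Hdisj Hss Hk Hp Hq Hkp Hkq.
  assert (Hq1 : ~ h1 q) by (intros H; exact (Hdisj q H Hq)).
  assert (Hp2 : ~ h2 p) by exact (Hdisj p Hp).
  assert (S1 : ~ transverse k h1 -> hat_sub h1 k).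
  { intros T. apply hat_sub_of_not_transverse; [exact T|exists p|exists q]; tauto. }
  assert (S2 : ~ transverse k h2 -> hat_sub h2 k).
  { intros T. apply hat_sub_of_not_transverse; [exact T|exists q|exists p]; tauto. }
  unfold in_beta.
  destruct (classic (transverse k h1)) as [T1|T1];
    destruct (classic (transverse k h2)) as [T2|T2].
  - exfalso. apply Hss. exists k; tauto.
  - right; left. tauto.
  - left. tauto.
  - right; right. tauto.
Qed.

Lemma closest_pair_in_bridge (h1 h2 : X -> Prop) p q : convex adj h1 -> subset h1 (compl h2) ->
  h1 p -> h2 q -> (forall p' q', h1 p' -> h2 q' -> d p q <= d p' q') -> bridge adj h1 h2 p.
Proof.
  intros Hc1 Hdisj Hp Hq Hmin k Hk Hb.
  destruct (in_beta_cases h1 h2 k Hdisj Hb) as [H1k|[H2k [r [Hr Hkr]]]]; [exact (H1k p Hp)|].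
  apply NNPP; intros Hkp.
  exact (closest_pair_side h1 h2 (compl k) p q Hc1 Hp Hq Hmin (halfspace_compl k Hk)
           Hkp (fun H => H (H2k q Hq)) r Hr Hkr).
Qed.

Lemma closest_pair_exists (A C : X -> Prop) : (exists a, A a) -> (exists c, C c) ->
  exists p q, A p /\ C q /\ forall p' q', A p' -> C q' -> d p q <= d p' q'.
Proof.
  intros [a Ha] [c Hc].
  destruct (least_nat_exists (fun n => exists p q, A p /\ C q /\ d p q = n))
    as [n [(p & q & Hp & Hq & Hn) Hmin]]; [exists (d a c), a, c; tauto|].
  exists p, q. split; [exact Hp|split; [exact Hq|]].
  intros p' q' Hp' Hq'. rewrite Hn. apply Hmin. exists p', q'; tauto.
Qed.

Section ClosestPair.
Variables (h1 h2 : X -> Prop) (p q : X).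
Hypothesis Hh1 : halfspace adj h1.
Hypothesis Hh2 : halfspace adj h2.
Hypothesis Hdisj : subset h1 (compl h2).
Hypothesis Hss : strongly_separated adj h1 h2.
Hypothesis Hp : h1 p.
Hypothesis Hq : h2 q.
Hypothesis Hclosest : forall p' q', h1 p' -> h2 q' -> d p q <= d p' q'.

Lemma bridge_closest_l : bridge adj h1 h2 p.
Proof. exact (closest_pair_in_bridge h1 h2 p q (proj1 (proj2 (proj2 Hh1))) Hdisj Hp Hq Hclosest). Qed.

Lemma bridge_closest_r : bridge adj h1 h2 q.
Proof.
  apply bridge_sym, (closest_pair_in_bridge h2 h1 q p (proj1 (proj2 (proj2 Hh2)))).
  - intros x H2x H1x. exact (Hdisj x H1x H2x).
  - exact Hq.
  - exact Hp.
  - intros q' p' Hq' Hp'. rewrite (d_sym q p), (d_sym q' p'). exact (Hclosest p' q' Hp' Hq').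
Qed.

Lemma bridge_iff_Iint m : bridge adj h1 h2 m <-> Iint adj p q m.
Proof.
  split.
  - intros Hm k Hk Hkp Hkq. exact (Hm k Hk (in_beta_of_meets h1 h2 k p q Hdisj Hss Hk Hp Hq Hkp Hkq)).
  - intros Hm k Hk Hb. exact (Hm k Hk (bridge_closest_l k Hk Hb) (bridge_closest_r k Hk Hb)).
Qed.

Lemma closest_separated k : halfspace adj k -> k p -> ~ k q ->
  subset h1 k /\ subset h2 (compl k).
Proof.
  apply closest_pair_separated;
    [exact (proj1 (proj2 (proj2 Hh1)))|exact (proj1 (proj2 (proj2 Hh2)))|..]; assumption.
Qed.

Lemma bridge_separating_iff h : halfspace adj h ->
  (exists x y, bridge adj h1 h2 x /\ bridge adj h1 h2 y /\ h x /\ ~ h y) <->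
  ((subset h1 h /\ subset h (compl h2)) \/ (subset h1 (compl h) /\ subset (compl h) (compl h2))).
Proof.
  intros Hh. split.
  - intros (x & y & Hx & Hy & Hhx & Hhy).
    rewrite bridge_iff_Iint in Hx, Hy.
    destruct (Iint_separation p q x y h Hh Hx Hy Hhx Hhy) as [[Hhp Hhq]|[Hhp Hhq]].
    + destruct (closest_separated h Hh Hhp Hhq) as [H1 H2].
      left. split; [exact H1|]. intros z Hz H2z. exact (H2 z H2z Hz).
    + destruct (closest_separated (compl h) (halfspace_compl h Hh) Hhp (fun H => H Hhq)) as [H1 H2].
      right. split; [exact H1|]. intros z Hz H2z. exact (H2 z H2z Hz).
  - intros [[H1 H2]|[H1 H2]].
    + exists p, q. split; [exact bridge_closest_l|split; [exact bridge_closest_r|split]].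
      * exact (H1 p Hp).
      * intros Hhq. exact (H2 q Hhq Hq).
    + exists q, p. split; [exact bridge_closest_r|split; [exact bridge_closest_l|split]].
      * apply NNPP; intros Hhq. exact (H2 q Hhq Hq).
      * exact (H1 p Hp).
Qed.

Lemma bridge_meet_l x : h1 x /\ bridge adj h1 h2 x <-> x = p.
Proof.
  split; [|intros ->; exact (conj Hp bridge_closest_l)].
  intros [H1x Hx]. apply NNPP; intros Hxp.
  destruct (halfspace_separation x p Hxp) as (k & Hk & Hkx & Hkp).
  destruct (proj1 (bridge_separating_iff k Hk) (ex_intro _ x (ex_intro _ p
    (conj Hx (conj bridge_closest_l (conj Hkx Hkp)))))) as [[H1 _]|[H1 _]].
  - exact (Hkp (H1 p Hp)).
  - exact (H1 x H1x Hkx).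
Qed.

Lemma bridge_meet_r x : h2 x /\ bridge adj h1 h2 x <-> x = q.
Proof.
  split; [|intros ->; exact (conj Hq bridge_closest_r)].
  intros [H2x Hx]. apply NNPP; intros Hxq.
  destruct (halfspace_separation x q Hxq) as (k & Hk & Hkx & Hkq).
  destruct (proj1 (bridge_separating_iff k Hk) (ex_intro _ x (ex_intro _ q
    (conj Hx (conj bridge_closest_r (conj Hkx Hkq)))))) as [[_ H2]|[_ H2]].
  - exact (H2 x Hkx H2x).
  - exact (H2 q Hkq Hq).
Qed.

End ClosestPair.
End MedianGraph.

Theorem corollary3 (X : Type) (adj : X -> X -> Prop)
  (Hmed : median_graph adj) (Hfd : finite_dim adj)
  (h1 h2 : X -> Prop) (Hh1 : halfspace adj h1) (Hh2 : halfspace adj h2)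
  (Hsub : psubset h1 (compl h2)) (Hss : strongly_separated adj h1 h2) :
  exists x1 x2 : X,
    (forall x, (h1 x /\ bridge adj h1 h2 x) <-> x = x1) /\
    (forall x, (h2 x /\ bridge adj h1 h2 x) <-> x = x2) /\
    (forall m, bridge adj h1 h2 m <-> Iint adj x1 x2 m) /\
    (forall h, halfspace adj h ->
       ((exists x y, bridge adj h1 h2 x /\ bridge adj h1 h2 y /\ h x /\ ~ h y) <->
        ((subset h1 h /\ subset h (compl h2)) \/
         (subset h1 (compl h) /\ subset (compl h) (compl h2))))).
Proof.
  clear Hfd.
  destruct Hsub as [Hdisj _].
  destruct (closest_pair_exists X adj Hmed h1 h2 (proj1 Hh1) (proj1 Hh2))
    as (p & q & Hp & Hq & Hclosest).
  exists p, q. split; [|split; [|split]].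
  - intros x. eapply bridge_meet_l; eassumption.
  - intros x. eapply bridge_meet_r; eassumption.
  - intros m. eapply bridge_iff_Iint; eassumption.
  - intros h. eapply bridge_separating_iff; eassumption.
Qed.
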